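(* For every ProbNetKAT program $p$, every input $a\subseteq\mathsf{Pk}$ and every set $A\subseteq 2^{\mathsf{Pk}}$, \[ [\![p^*]\!](a)(A) = \lim_{n\to\infty}[\![p^{(n)}]\!](a)(A). \]
   Context: Fix finitely many fields each ranging over a finite set of naturals; a packet $\pi$ assigns a value $\pi.f$ to each field $f$, $\pi[f:=n]$ updates field $f$; $\mathsf{Pk}$ is the finite set of packets. ProbNetKAT predicates: $t::=\mathsf{false}\mid\mathsf{true}\mid f=n\mid t\,\&\,u\mid t;u\mid\neg t$; programs: $p::=t\mid f\leftarrow n\mid p\,\&\,q\mid p;q\mid p\oplus_r q\mid p^*$ ($r\in[0,1]\cap\mathbb{Q}$). $p^{(0)}=\mathsf{true}$, $p^{(n+1)}=\mathsf{true}\,\&\,(p;p^{(n)})$. Denotational semantics $[\![p]\!]:2^{\mathsf{Pk}}\to\mathcal{D}(2^{\mathsf{Pk}})$, where $\mathcal{D}(X)$ is the set of probability distributions on finite $X$, $\delta_x$ is Dirac, $\mathcal{D}(g)(\mu)=\mu\circ g^{-1}$, $g^\dagger(\mu)(A)=\sum_x g(x)(A)\mu(x)$, $\mu\times\nu$ product, and $\mu\sqsubseteq\nu$ iff $\mu(\{b:c\subseteq b\})\le\nu(\{b:c\subseteq b\})$ for all $c\subseteq\mathsf{Pk}$: $[\![\mathsf{false}]\!](a)=\delta_\emptyset$; $[\![\mathsf{true}]\!](a)=\delta_a$; $[\![f=n]\!](a)=\delta_{\{\pi\in a:\pi.f=n\}}$; $[\![f\leftarrow n]\!](a)=\delta_{\{\pi[f:=n]:\pi\in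 a\}}$; $[\![\neg t]\!](a)=\mathcal{D}(\lambda b.a-b)([\![t]\!](a))$; $[\![p\,\&\,q]\!](a)=\mathcal{D}(\cup)([\![p]\!](a)\times[\![q]\!](a))$; $[\![p;q]\!](a)=[\![q]\!]^\dagger([\![p]\!](a))$; $[\![p\oplus_r q]\!](a)=r[\![p]\!](a)+(1-r)[\![q]\!](a)$; $[\![p^*]\!](a)=\bigsqcup_n[\![p^{(n)}]\!](a)$, the $\sqsubseteq$-supremum of the increasing chain $([\![p^{(n)}]\!](a))_n$. *)

From HB Require Import structures.
From mathcomp Require Import all_boot all_order all_algebra.
From mathcomp Require Import all_classical all_reals all_analysis.
From Stdlib Require Import ClassicalEpsilon.
Set Implicit Arguments. Unset Strict Implicit. Unset Printing Implicit Defensive.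
Import Order.TTheory GRing.Theory Num.Theory.
Local Open Scope ring_scope.

Section ProbNetKAT.
(* finitely many fields [F]; field [f] ranges over the naturals {0,...,bnd f - 1} *)
Variable F : finType.
Variable bnd : F -> nat.

Definition Pk : finType := {dffun forall f : F, 'I_(bnd f)}.

Definition pk_upd (pi : Pk) (f : F) (n : 'I_(bnd f)) : Pk :=
  @finfun F (fun g => 'I_(bnd g)) (@dfwith F (fun g => 'I_(bnd g)) (fun g => pi g) f n).

Inductive test : Type :=
  | TFalse : test
  | TTrue : test
  | TEq : forall f : F, 'I_(bnd f) -> test
  | TPar : test -> test -> test
  | TSeq : test -> test -> test
  | TNeg : test -> test.

Inductive prog : Type :=
  | PTest : test -> prog
  | PAsgn : forall f : F, 'I_(bnd f) -> prog
  | PPar : prog -> prog -> prog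
  | PSeq : prog -> prog -> prog
  | PChoice : prog -> prog -> forall r : rat, (0 <= r <= 1)%R -> prog
  | PStar : prog -> prog.

Fixpoint iterp (p : prog) (n : nat) : prog :=
  match n with
  | 0 => PTest TTrue
  | n'.+1 => PPar (PTest TTrue) (PSeq p (iterp p n'))
  end.

Variable R : realType.

(* (sub)distributions on 2^Pk, represented by their mass functions *)
Definition dist := {ffun {set Pk} -> R}.

Definition is_dist (mu : dist) : Prop :=
  (forall b, 0 <= mu b) /\ \sum_b mu b = 1.

Definition dmass (mu : dist) (A : {set {set Pk}}) : R := \sum_(b in A) mu b.

Definition ddirac (x : {set Pk}) : dist := [ffun y => (y == x)%:R].

Definition dmap (g : {set Pk} -> {set Pk}) (mu : dist) : dist :=
  [ffun y => \sum_(x | g x == y) mu x].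

Definition dunion (mu nu : dist) : dist :=
  [ffun c => \sum_x \sum_(y | x :|: y == c) mu x * nu y].

Definition dbind (g : {set Pk} -> dist) (mu : dist) : dist :=
  [ffun A => \sum_x g x A * mu x].

Definition dconv (r : R) (mu nu : dist) : dist :=
  [ffun A => r * mu A + (1 - r) * nu A].

Definition dle (mu nu : dist) : Prop :=
  forall c : {set Pk}, \sum_(b : {set Pk} | c \subset b) mu b <= \sum_(b : {set Pk} | c \subset b) nu b.

Definition is_dlub (ch : nat -> dist) (mu : dist) : Prop :=
  [/\ is_dist mu, (forall n, dle (ch n) mu) &
      forall nu, is_dist nu -> (forall n, dle (ch n) nu) -> dle mu nu].

Definition dlub (ch : nat -> dist) : dist :=
  epsilon (inhabits (ddirac (finset.set0 : {set Pk}))) (is_dlub ch).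

Fixpoint tsem (t : test) (a : {set Pk}) : dist :=
  match t with
  | TFalse => ddirac (finset.set0 : {set Pk})
  | TTrue => ddirac a
  | TEq f n => ddirac [set pi in a | pi f == n]
  | TPar t u => dunion (tsem t a) (tsem u a)
  | TSeq t u => dbind (tsem u) (tsem t a)
  | TNeg t => dmap (fun b => a :\: b) (tsem t a)
  end.

(* semantics of p^(n), given the semantics [f] of p *)
Fixpoint star_approx (f : {set Pk} -> dist) (n : nat) (a : {set Pk}) : dist :=
  match n with
  | 0 => ddirac a
  | n'.+1 => dunion (ddirac a) (dbind (star_approx f n') (f a))
  end.

Fixpoint sem (p : prog) : {set Pk} -> dist :=
  match p with
  | PTest t => tsem t
  | PAsgn f n => fun a => ddirac [set pk_upd pi n | pi in a]
  | PPar p q => fun a => dunion (sem p a) (sem q a)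
  | PSeq p q => fun a => dbind (sem q) (sem p a)
  | PChoice p q r _ => fun a => dconv (ratr r) (sem p a) (sem q a)
  | PStar p => let f := sem p in fun a => dlub (fun n => star_approx f n a)
  end.

End ProbNetKAT.

From HB Require Import structures.
From mathcomp Require Import all_boot all_order all_algebra.
From mathcomp Require Import all_classical all_reals all_analysis.
From Stdlib Require Import ClassicalEpsilon.
Import Order.TTheory GRing.Theory Num.Theory numFieldNormedType.Exports.
Local Open Scope classical_set_scope.
Local Open Scope ring_scope.

(* The order ⊑ compares distributions on 2^Pk through their upper masses
   upmass mu c = mu {b | c ⊆ b}.  Along the chain [[p^(n)]](a) every upper
   mass is nondecreasing and bounded by 1, hence convergent.  Since
   mu b = upmass mu b - Σ_{b ⊊ d} mu d, a downward induction over the finite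
   lattice 2^Pk shows that the masses themselves converge; their pointwise
   limit is a distribution, an ⊑-upper bound, and below every other upper
   bound.  As upper masses determine a distribution, ⊑ is antisymmetric, so
   this limit is the unique supremum [[p*]](a). *)

Lemma cvgn_sum (R : realType) (I : finType) (P : pred I)
    (u : nat -> I -> R) (l : I -> R) :
  (forall i, P i -> (fun n => u n i) @ \oo --> l i) ->
  (fun n => \sum_(i | P i) u n i) @ \oo --> \sum_(i | P i) l i.
Proof. by move=> u_cvg; apply: cvg_big => //; exact: add_continuous. Qed.

Section UpperMass.
Context {T : finType} {R : realType}.
Implicit Types (mu nu : {set T} -> R) (b c d : {set T}).

Definition upmass mu c : R := \sum_(b : {set T} | c \subset b) mu b.

Lemma superset_ind (P : {set T} -> Prop) :
  (forall b, (forall d, b \proper d -> P d) -> P b) -> forall b, P b.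
Proof.
move=> IH; suff bounded k b : (#|~: b| <= k)%N -> P b by move=> b; exact: bounded.
elim: k b => [|k IHk] b le_b; apply: IH => d lt_bd;
  have lt_card : (#|~: d| < #|~: b|)%N by apply: proper_card; rewrite properC.
  by move: (leq_trans lt_card le_b); rewrite ltn0.
by apply: IHk; rewrite -ltnS (leq_trans lt_card le_b).
Qed.

Lemma upmass_set0 mu : upmass mu finset.set0 = \sum_b mu b.
Proof. by apply: eq_bigl => b; rewrite finset.sub0set. Qed.

Lemma mass_upmass mu b : mu b = upmass mu b - \sum_(d : {set T} | b \proper d) mu d.
Proof.
rewrite /upmass (bigD1 b) //= -[RHS]addrA [X in _ + X](_ : _ = 0) ?addr0 //.
apply/eqP; rewrite subr_eq0; apply/eqP/eq_bigl => d.
by rewrite finset.properEneq eq_sym andbC.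
Qed.

Lemma upmass_inj mu nu : upmass mu =1 upmass nu -> mu =1 nu.
Proof.
move=> eq_up; apply: superset_ind => b IH.
by rewrite mass_upmass [RHS]mass_upmass eq_up; congr (_ - _); exact: eq_bigr.
Qed.

Lemma cvgn_of_upmass {u : nat -> {set T} -> R} :
  (forall c, cvgn (fun n => upmass (u n) c)) -> forall b, cvgn (fun n => u n b).
Proof.
move=> up_cvg; apply: superset_ind => b IH.
under eq_fun do rewrite (mass_upmass (u _) b).
apply: is_cvgB; first exact: up_cvg.
by apply: (cvgP (\sum_(d : {set T} | b \proper d) limn (fun n => u n d)));
  apply: cvgn_sum => d /IH.
Qed.

End UpperMass.

Section Distributions.
Context {F : finType} {bnd : F -> nat} {R : realType}.
Local Notation state := {set Pk bnd}.
Local Notation dist := (dist bnd R).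
Implicit Types (mu nu : dist) (a b c : state).

Lemma upmass_ge0 mu c : is_dist mu -> 0 <= upmass mu c.
Proof. by case=> mu_ge0 _; exact: sumr_ge0. Qed.

Lemma upmass_le1 mu c : is_dist mu -> upmass mu c <= 1.
Proof.
case=> mu_ge0 <-; rewrite [leRHS](bigID (fun b : state => c \subset b)) /= lerDl.
exact: sumr_ge0.
Qed.

Lemma dle_anti mu nu : dle mu nu -> dle nu mu -> mu = nu.
Proof.
move=> le_mn le_nm; apply/ffunP/upmass_inj => c.
by apply/le_anti; rewrite le_mn le_nm.
Qed.

Lemma is_dist_dirac a : is_dist (ddirac R a).
Proof.
split=> [b|]; first by rewrite ffunE ler0n.
by rewrite (bigD1 a) //= big1 ?addr0 ?ffunE ?eqxx // => b /negbTE; rewrite ffunE => ->.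
Qed.

Lemma upmass_dirac a c : upmass (ddirac R a) c = (c \subset a)%:R.
Proof.
rewrite /upmass; have [sub_ca|not_sub_ca] := boolP (c \subset a).
  rewrite (bigD1 a) //= big1 ?addr0 ?ffunE ?eqxx // => b /andP[_ /negbTE].
  by rewrite ffunE => ->.
apply: big1 => b sub_cb; rewrite ffunE; case: eqP => // eq_ba.
by rewrite -eq_ba sub_cb in not_sub_ca.
Qed.

Lemma dunion_diracE a nu b :
  dunion (ddirac R a) nu b = \sum_(y | a :|: y == b) nu y.
Proof.
rewrite ffunE (bigD1 a) //= [X in _ + X]big1 ?addr0.
  by apply: eq_bigr => y _; rewrite ffunE eqxx mul1r.
by move=> x /negbTE neq_xa; apply: big1 => y _; rewrite ffunE neq_xa mul0r.
Qed.

Lemma upmass_dunion_dirac a nu c :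
  upmass (dunion (ddirac R a) nu) c = upmass nu (c :\: a).
Proof.
rewrite /upmass [RHS](partition_big (fun y => a :|: y) (fun b => c \subset b)) /=;
  last by move=> y; rewrite subDset.
apply: eq_bigr => b sub_cb; rewrite dunion_diracE; apply: eq_bigl => y.
by case: eqP sub_cb => [<-|_ _]; rewrite ?andbT ?andbF ?subDset.
Qed.

Lemma upmass_dbind (g : state -> dist) mu c :
  upmass (dbind g mu) c = \sum_x mu x * upmass (g x) c.
Proof.
rewrite /upmass; under eq_bigr do rewrite ffunE.
rewrite exchange_big; apply: eq_bigr => x _; rewrite mulr_sumr.
by apply: eq_bigr => b _; rewrite mulrC.
Qed.

Lemma is_dist_dbind (g : state -> dist) mu :
  (forall x, is_dist (g x)) -> is_dist mu -> is_dist (dbind g mu).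
Proof.
move=> g_dist [mu_ge0 mu_sum1]; split=> [b|].
  by rewrite ffunE; apply: sumr_ge0 => x _; apply: mulr_ge0; [case: (g_dist x)|].
rewrite -upmass_set0 upmass_dbind -mu_sum1; apply: eq_bigr => x _.
by rewrite upmass_set0; case: (g_dist x) => _ ->; rewrite mulr1.
Qed.

Lemma is_dist_dunion mu nu : is_dist mu -> is_dist nu -> is_dist (dunion mu nu).
Proof.
move=> [mu_ge0 mu_sum1] [nu_ge0 nu_sum1]; split=> [c|].
  by rewrite ffunE; do 2![apply: sumr_ge0 => ? _]; exact: mulr_ge0.
under eq_bigr do rewrite ffunE.
rewrite exchange_big -mu_sum1; apply: eq_bigr => x _.
transitivity (\sum_y mu x * nu y).
  by rewrite [RHS](partition_big (fun y => x :|: y) predT).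
by rewrite -mulr_sumr nu_sum1 mulr1.
Qed.

Lemma is_dist_dmap g mu : is_dist mu -> is_dist (dmap g mu).
Proof.
move=> [mu_ge0 mu_sum1]; split=> [c|]; first by rewrite ffunE; exact: sumr_ge0.
under eq_bigr do rewrite ffunE.
by rewrite -mu_sum1 [RHS](partition_big g predT).
Qed.

Lemma is_dist_dconv (r : R) mu nu :
  0 <= r <= 1 -> is_dist mu -> is_dist nu -> is_dist (dconv r mu nu).
Proof.
move=> /andP[r_ge0 r_le1] [mu_ge0 mu_sum1] [nu_ge0 nu_sum1]; split=> [c|].
  by rewrite ffunE addr_ge0 ?mulr_ge0 ?subr_ge0.
under eq_bigr do rewrite ffunE.
by rewrite big_split /= -!mulr_sumr mu_sum1 nu_sum1 !mulr1 addrC subrK.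
Qed.

Definition dlim (ch : nat -> dist) : dist := [ffun b => limn (fun n => ch n b)].

Section Chains.
Variable ch : nat -> dist.
Hypothesis ch_dist : forall n, is_dist (ch n).
Hypothesis ch_incr : forall n, dle (ch n) (ch n.+1).

Lemma upmass_chain_nondecr c : nondecreasing_seq (fun n => upmass (ch n) c).
Proof. by apply/nondecreasing_seqP => n; exact: ch_incr. Qed.

Lemma upmass_chain_is_cvg c : cvgn (fun n => upmass (ch n) c).
Proof.
apply: nondecreasing_is_cvgn; first exact: upmass_chain_nondecr.
by exists 1 => _ [n _ <-]; exact: upmass_le1.
Qed.

Lemma chain_cvg b : (fun n => ch n b) @ \oo --> dlim ch b.
Proof. by rewrite ffunE; exact: (cvgn_of_upmass upmass_chain_is_cvg). Qed.

Lemma upmass_chain_cvg c : (fun n => upmass (ch n) c) @ \oo --> upmass (dlim ch) c.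
Proof. by apply: cvgn_sum => b _; exact: chain_cvg. Qed.

Lemma is_dist_dlim : is_dist (dlim ch).
Proof.
split=> [b|].
  rewrite ffunE; apply: limr_ge; first exact: (cvgn_of_upmass upmass_chain_is_cvg).
  by apply: nearW => n; case: (ch_dist n).
rewrite -upmass_set0 -(cvg_lim _ (upmass_chain_cvg finset.set0)) //.
under eq_fun do rewrite upmass_set0 (proj2 (ch_dist _)).
exact: lim_cst.
Qed.

Lemma is_dlub_dlim : is_dlub ch (dlim ch).
Proof.
split; first exact: is_dist_dlim.
  move=> n c; change (upmass (ch n) c <= upmass (dlim ch) c).
  rewrite -(cvg_lim _ (upmass_chain_cvg c)) //.
  exact: (nondecreasing_cvgn_le (upmass_chain_nondecr c) (upmass_chain_is_cvg c)).
move=> nu _ ub_nu c; change (upmass (dlim ch) c <= upmass nu c).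
rewrite -(cvg_lim _ (upmass_chain_cvg c)) //.
by apply: limr_le; [exact: upmass_chain_is_cvg | apply: nearW => n; exact: ub_nu].
Qed.

End Chains.

Lemma dlub_eq ch mu : is_dlub ch mu -> dlub ch = mu.
Proof.
move=> lub_mu; have lub_dlub : is_dlub ch (dlub ch) by apply: epsilon_spec; exists mu.
case: lub_mu lub_dlub => [mu_dist ub_mu least_mu] [dlub_dist ub_dlub least_dlub].
by apply: dle_anti; [exact: least_dlub | exact: least_mu].
Qed.

End Distributions.

Section StarApprox.
Context {F : finType} {bnd : F -> nat} {R : realType}.
Variable f : {set Pk bnd} -> dist bnd R.
Hypothesis f_dist : forall a, is_dist (f a).

Lemma star_approx_dist n a : is_dist (star_approx f n a).
Proof.
elim: n a => [|n IHn] a /=; first exact: is_dist_dirac.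
by apply: is_dist_dunion; [exact: is_dist_dirac | exact: is_dist_dbind].
Qed.

Lemma star_approx_incr n a : dle (star_approx f n a) (star_approx f n.+1 a).
Proof.
elim: n a => [|n IHn] a c.
  change (upmass (ddirac R a) c <= upmass (star_approx f 1 a) c).
  have step_dist : is_dist (dbind (star_approx f 0) (f a)).
    by apply: is_dist_dbind; [exact: star_approx_dist | exact: f_dist].
  rewrite /= upmass_dunion_dirac upmass_dirac.
  have [sub_ca|_] := boolP (c \subset a); last exact: upmass_ge0.
  have /eqP -> : c :\: a == finset.set0 by rewrite finset.setD_eq0.
  by rewrite upmass_set0; case: step_dist => _ ->.
change (upmass (star_approx f n.+1 a) c <= upmass (star_approx f n.+2 a) c).
rewrite [star_approx f n.+1 a]/= [star_approx f n.+2 a]/=.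
rewrite !upmass_dunion_dirac !upmass_dbind.
apply: ler_sum => x _; apply: ler_wpM2l; [by case: (f_dist a) | exact: IHn].
Qed.

Lemma dlub_star_approx a :
  dlub (fun n => star_approx f n a) = dlim (fun n => star_approx f n a).
Proof.
apply/dlub_eq/is_dlub_dlim => n; [exact: star_approx_dist | exact: star_approx_incr].
Qed.

End StarApprox.

Section Semantics.
Context {F : finType} {bnd : F -> nat} {R : realType}.

Lemma tsem_dist (t : test bnd) a : is_dist (tsem R t a).
Proof.
elim: t a => [||f n|t IHt u IHu|t IHt u IHu|t IHt] a /=; try exact: is_dist_dirac.
- by apply: is_dist_dunion; [exact: IHt | exact: IHu].
- by apply: is_dist_dbind; [exact: IHu | exact: IHt].
- by apply: is_dist_dmap; exact: IHt.
Qed.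

Lemma sem_dist (p : prog bnd) a : is_dist (sem R p a).
Proof.
elim: p a => [t|f n|p IHp q IHq|p IHp q IHq|p IHp q IHq r /andP[r_ge0 r_le1]|p IHp] a /=.
- exact: tsem_dist.
- exact: is_dist_dirac.
- by apply: is_dist_dunion; [exact: IHp | exact: IHq].
- by apply: is_dist_dbind; [exact: IHq | exact: IHp].
- apply: is_dist_dconv; [|exact: IHp|exact: IHq].
  by rewrite ler0q r_ge0 /= -(rmorph1 (@ratr R)) ler_rat.
- rewrite dlub_star_approx //.
  by apply: is_dist_dlim => n; [apply: star_approx_dist | apply: star_approx_incr].
Qed.

Lemma sem_iterp (p : prog bnd) n : sem R (iterp p n) = star_approx (sem R p) n.
Proof. by elim: n => //= n ->. Qed.

Lemma sem_star_cvg (p : prog bnd) a b :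
  (fun n => sem R (iterp p n) a b) @ \oo --> sem R (PStar p) a b.
Proof.
rewrite /= dlub_star_approx; last exact: sem_dist.
under eq_cvg do rewrite sem_iterp.
apply: chain_cvg => n; [apply: star_approx_dist | apply: star_approx_incr];
  exact: sem_dist.
Qed.

End Semantics.

Theorem lemmaA2 (F : finType) (bnd : F -> nat) (R : realType)
    (p : prog bnd) (a : {set Pk bnd}) (A : {set {set Pk bnd}}) :
  (fun n => dmass (sem R (iterp p n) a) A) @ \oo --> dmass (sem R (PStar p) a) A.
Proof. by apply: cvgn_sum => b _; exact: sem_star_cvg. Qed.
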